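(* Let $k$ be an algebraically closed field of characteristic zero, $n\ge1$, $q\in k$ a primitive $2n$-th root of unity, $a\in k\setminus\{0\}$. Let $\mathfrak wH_{4n}$ be the weak Hopf algebra generated by $Z,X$ with $Z^{2n+1}=Z$, $ZX=qXZ$, $X^2=0$, $\Delta(Z)=Z\otimes Z+a(1-q^{-2})Z^{n+1}X\otimes ZX$, $\Delta(X)=X\otimes 1+Z^n\otimes X$, $\epsilon(Z)=1$, $\epsilon(X)=0$. Let $S_1$ be the $1$-dimensional module with $X$ acting by $0$ and $Z$ by $q$; $M_0$ the $2$-dimensional module with basis $v_1,v_2$, $Xv_1=v_2$, $Xv_2=0$, $Zv_1=v_1$, $Zv_2=qv_2$; $N_0$ the $1$-dimensional module on which $Z,X$ act by $0$. Let $b=[S_1]$, $c=[M_0]$, $d=[N_0]$ in the Green ring $r(\mathfrak wH_{4n})$. Then $r(\mathfrak wH_{4n})$ is generated as a ring by $b,c,d$, and the set $\{b^ic^j\mid 0\le i\le 2n-1,\ j=0,1\}\cup\{c^kd\mid k=0,1\}$ is a $\mathbb Z$-basis of $r(\mathfrak wH_{4n})$.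
   Context: The Green ring $r(A)$ of $A=\mathfrak wH_{4n}$ is the free abelian group on isomorphism classes $[M]$ of finite-dimensional $A$-modules modulo $[M\oplus N]=[M]+[N]$, with multiplication $[M][N]=[M\otimes N]$ where $M\otimes N$ is an $A$-module via $\Delta$. *)

From HB Require Import structures.
From mathcomp Require Import all_boot all_order all_algebra.
From mathcomp Require Import mxtens.
Set Implicit Arguments. Unset Strict Implicit. Unset Printing Implicit Defensive.
Import GRing.Theory.
Local Open Scope ring_scope.

Section WeakTaft.
Variable k : fieldType.

(* A finite-dimensional module over wH_{4n}: dimension m, and the matrices by
   which Z and X act on column vectors of k^m. *)
Definition wmod := {m : nat & ('M[k]_m * 'M[k]_m)%type}.
Definition mdim (M : wmod) : nat := tag M.
Definition mZ (M : wmod) : 'M[k]_(mdim M) := (tagged M).1.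
Definition mX (M : wmod) : 'M[k]_(mdim M) := (tagged M).2.
Definition mkMod m (Z X : 'M[k]_m) : wmod :=
  Tagged (fun m => ('M[k]_m * 'M[k]_m)%type) (Z, X).

Definition is_wmod (n : nat) (q : k) (M : wmod) : Prop :=
  [/\ mZ M ^+ (2 * n).+1 = mZ M,
      mZ M *m mX M = q *: (mX M *m mZ M) &
      mX M *m mX M = 0].

Definition dsum (M N : wmod) : wmod :=
  mkMod (block_mx (mZ M) 0 0 (mZ N)) (block_mx (mX M) 0 0 (mX N)).

(* tensor product M (x) N, A acting via
   Delta(Z) = Z(x)Z + a(1-q^{-2}) Z^{n+1}X (x) ZX,  Delta(X) = X(x)1 + Z^n(x)X *)
Definition tens (n : nat) (q a : k) (M N : wmod) : wmod :=
  mkMod (mZ M *t mZ N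
         + (a * (1 - q^-2)) *: ((mZ M ^+ n.+1 *m mX M) *t (mZ N *m mX N)))
        (mX M *t (1%:M : 'M[k]_(mdim N)) + mZ M ^+ n *t mX N).

Definition wiso (M N : wmod) : Prop :=
  exists (f : 'M[k]_(mdim N, mdim M)) (g : 'M[k]_(mdim M, mdim N)),
    [/\ g *m f = 1%:M, f *m g = 1%:M,
        f *m mZ M = mZ N *m f & f *m mX M = mX N *m f].

(* Formal Z-linear combinations of modules (free abelian group on modules). *)
Definition fz := seq (int * wmod).
Definition coef (x : fz) (M : wmod) : int := \sum_(e <- x | e.2 == M) e.1.
Definition all_valid (n : nat) (q : k) (x : fz) : Prop :=
  forall e, e \in x -> is_wmod n q e.2.

(* Generators of the relation subgroup: [M (+) N] - [M] - [N], and
   [M] - [M'] for isomorphic M, M' (passing to isomorphism classes). *)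
Definition green_rel (n : nat) (q : k) (r : fz) : Prop :=
  (exists M N, [/\ is_wmod n q M, is_wmod n q N &
                  r = [:: (1, dsum M N); (-1, M); (-1, N)]])
  \/ (exists M N, [/\ is_wmod n q M, is_wmod n q N, wiso M N &
                  r = [:: (1, M); (-1, N)]]).

Definition green_eq (n : nat) (q : k) (x y : fz) : Prop :=
  exists rs : seq (int * fz),
    (forall p, p \in rs -> green_rel n q p.2) /\
    forall M, coef x M - coef y M = \sum_(p <- rs) p.1 * coef p.2 M.

(* trivial module k_epsilon: Z acts by epsilon(Z) = 1, X by 0;
   its class is the identity of r(wH_{4n}) *)
Definition unitM : wmod := mkMod (1%:M : 'M[k]_1) 0.
Definition S1 (q : k) : wmod := mkMod (q%:M : 'M[k]_1) 0.
Definition N0 : wmod := mkMod (0 : 'M[k]_1) 0.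
Definition M0 (q : k) : wmod :=
  mkMod (\matrix_(i < 2, j < 2)
           (if i == j then (if (i == 0 :> nat) then 1 else q) else 0))
        (\matrix_(i < 2, j < 2)
           (if (i == 1 :> nat) && (j == 0 :> nat) then 1 else 0)).

Definition mpow (n : nat) (q a : k) (M : wmod) (i : nat) : wmod :=
  iter i (tens n q a M) unitM.

Definition bcMod n q a (i j : nat) : wmod :=
  tens n q a (mpow n q a (S1 q) i) (mpow n q a (M0 q) j).
Definition cdMod n q a (l : nat) : wmod :=
  tens n q a (mpow n q a (M0 q) l) N0.

(* words in the generators b (0), c (1), d (2); empty word = 1 *)
Definition genMod (q : k) (l : 'I_3) : wmod :=
  if (l == 0 :> nat) then S1 q else if (l == 1 :> nat) then M0 q else N0.
Definition wordMod n q a (w : seq 'I_3) : wmod :=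
  foldr (fun l acc => tens n q a (genMod q l) acc) unitM w.

Definition basis_comb n q a (lam : nat -> nat -> int) (mu : nat -> int) : fz :=
  [seq (lam i j, bcMod n q a i j) | i <- iota 0 (2 * n), j <- iota 0 2]
  ++ [seq (mu l, cdMod n q a l) | l <- iota 0 2].

End WeakTaft.

From HB Require Import structures.
From mathcomp Require Import all_boot all_order all_algebra.
From mathcomp Require Import mxtens ring.
Import GRing.Theory.
Local Open Scope ring_scope.
Set Implicit Arguments. Unset Strict Implicit. Unset Printing Implicit Defensive.

(* Since q is a primitive 2n-th root of unity, Z^(2n+1) = Z has the distinct
   roots 0, q^i, so Z is diagonalizable.  In an eigenbasis either X = 0 and a
   line on which Z acts by a scalar c splits off as S(c), or some entry X_ij is
   nonzero; then ZX = qXZ forces d_i = q d_j and the plane spanned by e_j and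
   X e_j splits off as the two-dimensional module D(d_j).  By induction on the
   dimension every module is a direct sum of modules S(c) and D(c) with c = 0 or
   c = q^i, and these are, up to isomorphism, exactly the products b^i, b^i c, d
   and c d.  The ranks of Z - c and of X (Z - c) are additive isomorphism
   invariants that determine the multiplicity of every S(c) and D(c), which
   gives linear independence. *)

Section Isomorphism.
Variable k : fieldType.
Implicit Types M N P : wmod k.

Lemma intertw_exp m p (f : 'M[k]_(p, m)) (A : 'M_m) (B : 'M_p) j :
  f *m A = B *m f -> f *m A ^+ j = B ^+ j *m f.
Proof.
move=> fA; elim: j => [|j IH]; first by rewrite !expr0 mulmx1 mul1mx.
by rewrite !exprS -!mulmxE mulmxA fA -mulmxA IH mulmxA.
Qed.

Lemma intertw_conj m p (f : 'M[k]_(p, m)) (g : 'M_(m, p)) (A : 'M_m) (B : 'M_p) :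
  f *m g = 1%:M -> f *m A = B *m f -> B = f *m A *m g.
Proof. by move=> fg fA; rewrite fA -mulmxA fg mulmx1. Qed.

Lemma intertw_inv m p (f : 'M[k]_(p, m)) (g : 'M_(m, p)) (A : 'M_m) (B : 'M_p) :
  g *m f = 1%:M -> f *m g = 1%:M -> f *m A = B *m f -> g *m B = A *m g.
Proof.
by move=> gf fg /(intertw_conj fg) ->; rewrite !mulmxA gf mul1mx.
Qed.

Lemma wiso_refl M : wiso M M.
Proof. by exists 1%:M, 1%:M; rewrite !mulmx1 !mul1mx. Qed.

Lemma wiso_sym M N : wiso M N -> wiso N M.
Proof.
case=> f [g [gf fg fZ fX]]; exists g, f.
by split => //; [apply: (intertw_inv gf fg fZ) | apply: (intertw_inv gf fg fX)].
Qed.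

Lemma wiso_trans M N P : wiso M N -> wiso N P -> wiso M P.
Proof.
case=> f [g [gf fg fZ fX]] [f' [g' [gf' fg' fZ' fX']]].
exists (f' *m f), (g *m g'); split.
- by rewrite mulmxA -[g *m g' *m f']mulmxA gf' mulmx1 gf.
- by rewrite mulmxA -[f' *m f *m g]mulmxA fg mulmx1 fg'.
- by rewrite -mulmxA fZ mulmxA fZ' mulmxA.
- by rewrite -mulmxA fX mulmxA fX' mulmxA.
Qed.

Lemma wiso_dim M N : wiso M N -> mdim M = mdim N.
Proof.
have le_dim m p (f : 'M[k]_(p, m)) (g : 'M_(m, p)) : g *m f = 1%:M -> (m <= p)%N.
  by move=> gf; rewrite -(mxrank1 k m) -gf (leq_trans (mxrankM_maxr _ _)) ?rank_leq_row.
case=> f [g [gf fg _ _]].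
by apply/eqP; rewrite eqn_leq (le_dim _ _ _ _ gf) (le_dim _ _ _ _ fg).
Qed.

Lemma block_diag_mul m1 m2 (A B : 'M[k]_m1) (C D : 'M_m2) :
  block_mx A 0 0 C *m block_mx B 0 0 D = block_mx (A *m B) 0 0 (C *m D).
Proof. by rewrite mulmx_block !mulmx0 !mul0mx !addr0 !add0r. Qed.

Lemma block_diag_exp m1 m2 (A : 'M[k]_m1) (C : 'M_m2) j :
  (block_mx A 0 0 C : 'M_(m1 + m2)) ^+ j = block_mx (A ^+ j) 0 0 (C ^+ j).
Proof.
elim: j => [|j IH]; first by rewrite !expr0 -scalar_mx_block.
by rewrite !exprS IH -!mulmxE block_diag_mul.
Qed.

Lemma block_diag_sub_scalar m1 m2 (A : 'M[k]_m1) (B : 'M_m2) c :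
  block_mx A 0 0 B - c%:M = block_mx (A - c%:M) 0 0 (B - c%:M).
Proof. by rewrite [c%:M](scalar_mx_block m1 m2) opp_block_mx add_block_mx !subr0. Qed.

Variables (n : nat) (q : k).

Lemma wiso_wmod M N : wiso M N -> is_wmod n q M -> is_wmod n q N.
Proof.
case=> f [g [gf fg fZ fX]] [VZ VZX VX].
have gfK A B : f *m A *m g *m (f *m B *m g) = f *m (A *m B) *m g.
  by rewrite !mulmxA -(mulmxA _ g f) gf mulmx1.
have eZ := intertw_conj fg fZ; have eX := intertw_conj fg fX.
split.
- by rewrite (intertw_conj fg (intertw_exp _ fZ)) VZ -eZ.
- by rewrite eZ eX !gfK VZX -scalemxAr -scalemxAl.
- by rewrite eX gfK VX mulmx0 mul0mx.
Qed.

Lemma is_wmod_dsum M N :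
  is_wmod n q (dsum M N) <-> is_wmod n q M /\ is_wmod n q N.
Proof.
have e0 : (0 : 'M[k]_(mdim M + mdim N)) = block_mx 0 0 0 0 by rewrite block_mx0.
rewrite /is_wmod /dsum /mZ /mX /= block_diag_exp !block_diag_mul.
rewrite scale_block_mx !scaler0 [in X in [/\ _, _ & X]]e0.
split; last by case=> [[-> -> ->] [-> -> ->]].
case=> /eq_block_mx [? _ _ ?] /eq_block_mx [? _ _ ?] /eq_block_mx [? _ _ ?].
by split; split.
Qed.

End Isomorphism.

Section Indecomposables.
Variable k : fieldType.
Variables (n : nat) (q a : k).

Definition modS (c : k) : wmod k := mkMod (c%:M : 'M[k]_1) 0.
Definition modD (l x : k) : wmod k :=
  mkMod (block_mx l%:M 0 0 (q * l)%:M : 'M[k]_(1 + 1)) (block_mx 0 0 x%:M 0).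
Definition indec (j : nat) (c : k) : wmod k := if j is 0%N then modS c else modD c 1.

Lemma unitM_modS : unitM k = modS 1. Proof. by []. Qed.
Lemma N0_modS : N0 k = modS 0. Proof. by rewrite /N0 /modS raddf0. Qed.

Lemma M0_modD : M0 q = modD 1 1.
Proof.
congr mkMod; apply/matrixP => i j; rewrite !mxE.
all: case: (@splitP 1 1 i) => i1; rewrite !ord1 => Ei; rewrite !mxE.
all: case: (@splitP 1 1 j) => j1; rewrite !ord1 => Ej; rewrite !mxE.
all: by rewrite -?val_eqE /= Ei Ej ?mulr1.
Qed.

Lemma tens_modS c d : tens n q a (modS c) (modS d) = modS (c * d).
Proof.
rewrite /tens /mZ /mX /=; congr mkMod; last by rewrite tens0mx tensmx0 addr0.
by rewrite mulmx0 tens0mx scaler0 addr0 tens_scalar_mx castmx_id scale_scalar_mx.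
Qed.

Lemma tens_modS_modD c l x :
  tens n q a (modS c) (modD l x) = modD (c * l) (c ^+ n * x).
Proof.
rewrite /tens /mZ /mX /=; congr mkMod.
  rewrite mulmx0 tens0mx scaler0 addr0 tens_scalar_mx castmx_id scale_block_mx.
  by rewrite !scaler0 !scale_scalar_mx mulrCA.
rewrite tens0mx add0r -rmorphXn tens_scalar_mx castmx_id scale_block_mx !scaler0.
by rewrite scale_scalar_mx.
Qed.

Lemma tens_modD_modS l x c : tens n q a (modD l x) (modS c) = modD (l * c) x.
Proof.
rewrite /tens /mZ /mX /=; congr mkMod.
  rewrite mulmx0 tensmx0 scaler0 addr0 tens_mx_scalar castmx_id scale_block_mx.
  by rewrite !scaler0 !scale_scalar_mx !(mulrC c) -mulrA.
by rewrite tensmx0 addr0 tens_mx_scalar castmx_id scale1r.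
Qed.

Lemma modD_wiso l x : x != 0 -> wiso (modD l x) (modD l 1).
Proof.
move=> x0; exists (block_mx x%:M 0 0 1%:M), (block_mx x^-1%:M 0 0 1%:M).
rewrite /mZ /mX /= !block_diag_mul !mulmx_block !mulmx0 !mul0mx !addr0 !add0r.
rewrite !mulmx1 !mul1mx -!scalar_mxM mulVf // mulfV // mulrC -!scalar_mx_block.
by split.
Qed.

Hypothesis q_order : q ^+ (2 * n) = 1.

Lemma indec_wmod j c : c ^+ (2 * n).+1 = c -> is_wmod n q (indec j c).
Proof.
move=> c_root; case: j => [|j]; rewrite /is_wmod /mZ /mX /=.
  by rewrite -rmorphXn c_root mulmx0 mul0mx scaler0 mulmx0.
rewrite block_diag_exp -!rmorphXn exprMn c_root exprS q_order mulr1.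
rewrite !mulmx_block !mulmx0 !mul0mx !addr0 !add0r scale_block_mx !scaler0.
by rewrite -!scalar_mxM scale_scalar_mx mulr1 mul1r block_mx0.
Qed.

End Indecomposables.

Section BasisModules.
Variable k : fieldType.
Variables (n : nat) (q a : k).
Local Notation tens := (tens n q a).
Local Notation modD := (modD q).

Lemma iter_tens_modS i c d : iter i (tens (modS c)) (modS d) = modS (c ^+ i * d).
Proof. by elim: i => [|i /= ->]; rewrite ?mul1r // tens_modS exprS mulrA. Qed.

Lemma iter_tens_modS_modD i c l x :
  iter i (tens (modS c)) (modD l x) = modD (c ^+ i * l) (c ^+ i ^+ n * x).
Proof.
elim: i => [|i /= ->]; first by rewrite !expr0 expr1n !mul1r.
by rewrite tens_modS_modD exprS exprMn !mulrA.
Qed.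

Lemma mpow_M0_1 : mpow n q a (M0 q) 1 = modD 1 1.
Proof. by rewrite /mpow /= M0_modD unitM_modS tens_modD_modS mulr1. Qed.

Lemma mpow_S1 i : mpow n q a (S1 q) i = modS (q ^+ i).
Proof. by rewrite /mpow unitM_modS iter_tens_modS mulr1. Qed.

Lemma bcMod0 i : bcMod n q a i 0 = modS (q ^+ i).
Proof. by rewrite /bcMod mpow_S1 /mpow /= unitM_modS tens_modS mulr1. Qed.

Lemma bcMod1 i : bcMod n q a i 1 = modD (q ^+ i) (q ^+ i ^+ n).
Proof. by rewrite /bcMod mpow_S1 mpow_M0_1 tens_modS_modD !mulr1. Qed.

Lemma cdMod0 : cdMod n q a 0 = modS 0.
Proof. by rewrite /cdMod /mpow /= unitM_modS N0_modS tens_modS mulr0. Qed.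

Lemma cdMod1 : cdMod n q a 1 = modD 0 1.
Proof. by rewrite /cdMod mpow_M0_1 N0_modS tens_modD_modS mulr0. Qed.

Definition gen_b : 'I_3 := @Ordinal 3 0 isT.
Definition gen_c : 'I_3 := @Ordinal 3 1 isT.
Definition gen_d : 'I_3 := @Ordinal 3 2 isT.

Definition bc_word (i j : nat) : seq 'I_3 := nseq i gen_b ++ nseq j gen_c.
Definition cd_word (l : nat) : seq 'I_3 := nseq l gen_c ++ [:: gen_d].

Lemma wordMod_bc i j : (j < 2)%N -> wordMod n q a (bc_word i j) = bcMod n q a i j.
Proof.
have -> : wordMod n q a (bc_word i j) =
    iter i (tens (S1 q)) (wordMod n q a (nseq j gen_c)).
  by elim: i => //= i ->.
case: j => [|[|//]] _; rewrite /wordMod /genMod /= unitM_modS.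
  by rewrite iter_tens_modS bcMod0 mulr1.
by rewrite M0_modD tens_modD_modS iter_tens_modS_modD bcMod1 !mulr1 -!exprM mulnC.
Qed.

Lemma wordMod_cd l : (l < 2)%N -> wordMod n q a (cd_word l) = cdMod n q a l.
Proof.
case: l => [|[|//]] _; rewrite /wordMod /genMod /= unitM_modS N0_modS tens_modS mul0r.
  by rewrite cdMod0.
by rewrite M0_modD tens_modD_modS mulr0 cdMod1.
Qed.

Definition basis_words (lam : nat -> nat -> int) (mu : nat -> int) :
    seq (int * seq 'I_3) :=
  [seq (lam i j, bc_word i j) | i <- iota 0 (2 * n), j <- iota 0 2]
  ++ [seq (mu l, cd_word l) | l <- iota 0 2].

Lemma basis_words_comb lam mu :
  [seq (w.1, wordMod n q a w.2) | w <- basis_words lam mu] = basis_comb n q a lam mu.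
Proof.
rewrite map_cat map_allpairs -map_comp; congr (_ ++ _).
  apply/eq_in_allpairs_dep => i _ j; rewrite mem_iota => /= j_lt2.
  by rewrite wordMod_bc.
by apply/eq_in_map => l; rewrite mem_iota => /= l_lt2; rewrite wordMod_cd.
Qed.

Hypothesis q_neq0 : q != 0.

Lemma bcMod_wiso i j : (j < 2)%N -> wiso (bcMod n q a i j) (indec q j (q ^+ i)).
Proof.
case: j => [|[|//]] _; first by rewrite bcMod0; apply: wiso_refl.
by rewrite bcMod1; apply: modD_wiso; rewrite !expf_neq0.
Qed.

Lemma cdMod_indec l : (l < 2)%N -> cdMod n q a l = indec q l 0.
Proof. by case: l => [|[|//]] _; rewrite ?cdMod0 ?cdMod1. Qed.

End BasisModules.

Section GreenEquivalence.
Variable k : fieldType.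
Variables (n : nat) (q : k).
Implicit Types (x y : fz k) (M N : wmod k).
Local Notation green_eq := (green_eq n q).

Lemma coef_nil M : coef [::] M = 0.
Proof. by rewrite /coef big_nil. Qed.

Lemma coef_cons e x M : coef (e :: x) M = (if e.2 == M then e.1 else 0) + coef x M.
Proof. by rewrite /coef big_cons; case: ifP => _; rewrite ?add0r. Qed.

Lemma coef_cat x y M : coef (x ++ y) M = coef x M + coef y M.
Proof. by rewrite /coef big_cat. Qed.

Definition fz_scale (c : int) x : fz k := [seq (c * e.1, e.2) | e <- x].

Lemma coef_scale c x M : coef (fz_scale c x) M = c * coef x M.
Proof.
rewrite /coef big_map mulr_sumr big_mkcond [RHS]big_mkcond.
by apply: eq_bigr => e _; case: ifP; rewrite ?mulr0.
Qed.

Lemma green_eq_coef x x' y y' : coef x =1 coef x' -> coef y =1 coef y' ->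
  green_eq x y -> green_eq x' y'.
Proof. by move=> ex ey [rs [H1 H2]]; exists rs; split => // M; rewrite -ex -ey. Qed.

Lemma green_eq_refl x : green_eq x x.
Proof. by exists [::]; split => [p|M]; rewrite ?in_nil // big_nil subrr. Qed.

Lemma green_eq_trans x y z : green_eq x y -> green_eq y z -> green_eq x z.
Proof.
case=> rs [H1 H2] [rs' [H1' H2']]; exists (rs ++ rs'); split.
  by move=> p; rewrite mem_cat => /orP [/H1|/H1'].
by move=> M; rewrite big_cat /= -H2 -H2' addrA subrK.
Qed.

Lemma green_eq_cat x y x' y' :
  green_eq x y -> green_eq x' y' -> green_eq (x ++ x') (y ++ y').
Proof.
case=> rs [H1 H2] [rs' [H1' H2']]; exists (rs ++ rs'); split.
  by move=> p; rewrite mem_cat => /orP [/H1|/H1'].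
by move=> M; rewrite big_cat /= -H2 -H2' !coef_cat opprD addrACA.
Qed.

Lemma green_eq_scale c x y : green_eq x y -> green_eq (fz_scale c x) (fz_scale c y).
Proof.
case=> rs [H1 H2]; exists [seq (c * p.1, p.2) | p <- rs]; split.
  by move=> p /mapP [p' /H1 ? ->].
move=> M; rewrite big_map !coef_scale -mulrBr H2 mulr_sumr.
by apply: eq_bigr => p _; rewrite mulrA.
Qed.

Lemma green_eq_wiso M N : is_wmod n q M -> is_wmod n q N -> wiso M N ->
  green_eq [:: (1, M)] [:: (1, N)].
Proof.
move=> VM VN iMN; exists [:: (1, [:: (1, M); (-1, N)])]; split.
  by move=> p; rewrite inE => /eqP -> /=; right; exists M, N.
move=> P; rewrite big_seq1 mul1r !coef_cons !coef_nil !addr0 /=.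
by case: (N == P); rewrite ?subr0 ?addr0.
Qed.

Lemma green_eq_dsum M N : is_wmod n q M -> is_wmod n q N ->
  green_eq [:: (1, dsum M N)] [:: (1, M); (1, N)].
Proof.
move=> VM VN; exists [:: (1, [:: (1, dsum M N); (-1, M); (-1, N)])]; split.
  by move=> p; rewrite inE => /eqP -> /=; left; exists M, N.
move=> P; rewrite big_seq1 mul1r !coef_cons !coef_nil !addr0 /=.
by case: (M == P); case: (N == P); rewrite ?subr0 ?addr0 ?sub0r ?add0r ?opprD.
Qed.

Lemma green_eq_dim0 M : mdim M = 0%N -> is_wmod n q M -> green_eq [:: (1, M)] [::].
Proof.
case: M => [m [Z X]] /= m0; move: Z X; rewrite m0 => Z X VM.
have dsum_id : dsum (mkMod Z X) (mkMod Z X) = mkMod Z X.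
  by rewrite /dsum; congr mkMod; apply/matrixP => -[].
set M := mkMod Z X in VM dsum_id *.
exists [:: (-1, [:: (1, dsum M M); (-1, M); (-1, M)])].
split; first by move=> p; rewrite inE => /eqP -> /=; left; exists M, M.
move=> P; rewrite big_seq1 dsum_id !coef_cons !coef_nil /=.
by case: (_ == P); rewrite ?mulr0 ?subr0 ?addr0 // mulN1r !addr0 opprB opprK addrK.
Qed.

Definition fz_eval (phi : wmod k -> int) x : int := \sum_(e <- x) e.1 * phi e.2.

Lemma fz_eval_coef phi (s : seq (wmod k)) x : uniq s ->
  {subset [seq e.2 | e <- x] <= s} -> fz_eval phi x = \sum_(M <- s) coef x M * phi M.
Proof.
move=> s_uniq; elim: x => [|e x IH] sub.
  by rewrite /fz_eval big_nil big1 // => M _; rewrite coef_nil mul0r.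
have e_s : e.2 \in s by apply: sub; rewrite inE eqxx.
rewrite /fz_eval big_cons -/(fz_eval phi x) IH; last first.
  by move=> M Mx; apply: sub; rewrite inE Mx orbT.
rewrite (bigD1_seq e.2) //= [RHS](bigD1_seq e.2) //= coef_cons eqxx.
rewrite mulrDl -addrA; congr (_ + (_ + _)).
by apply: eq_bigr => M neM; rewrite coef_cons eq_sym (negPf neM) add0r.
Qed.

Lemma fz_eval_green phi :
  (forall M N, phi (dsum M N) = phi M + phi N) ->
  (forall M N, wiso M N -> phi M = phi N) ->
  forall x y, green_eq x y -> fz_eval phi x = fz_eval phi y.
Proof.
move=> phiD phi_iso x y [rs [H1 H2]].
pose s := undup ([seq e.2 | e <- x] ++ [seq e.2 | e <- y] ++
                 flatten [seq [seq e.2 | e <- p.2] | p <- rs]).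
have s_uniq : uniq s by apply: undup_uniq.
have evalE z : {subset [seq e.2 | e <- z] <= s} ->
    fz_eval phi z = \sum_(M <- s) coef z M * phi M.
  exact: fz_eval_coef.
apply/eqP; rewrite -subr_eq0 !evalE; last 2 first.
- by move=> M My; rewrite mem_undup !mem_cat My orbT.
- by move=> M Mx; rewrite mem_undup mem_cat Mx.
rewrite -sumrB; under eq_bigr => M _ do rewrite -mulrBl H2 mulr_suml.
rewrite exchange_big /= big1_seq // => p p_rs /=.
have -> : \sum_(M <- s) p.1 * coef p.2 M * phi M = p.1 * fz_eval phi p.2.
  rewrite evalE ?mulr_sumr; first by apply: eq_bigr => M _; rewrite mulrA.
  move=> M Mp; rewrite mem_undup !mem_cat; apply/orP; right; apply/orP; right.
  by apply/flattenP; exists [seq e.2 | e <- p.2] => //; apply/mapP; exists p.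
case: (H1 p p_rs) => [[M [N [_ _ ->]]]|[M [N [_ _ iMN ->]]]];
  rewrite /fz_eval !big_cons big_nil /=.
  by rewrite phiD !mul1r !mulN1r addr0 -opprD subrr mulr0.
by rewrite (phi_iso _ _ iMN) mul1r mulN1r addr0 subrr mulr0.
Qed.

End GreenEquivalence.

Section Splitting.
Variable k : fieldType.
Implicit Types M : wmod k.

Lemma idempotent_factor m (E : 'M[k]_m) : E *m E = E ->
  exists r (C : 'M_(m, r)) (C' : 'M_(r, m)), C *m C' = E /\ C' *m C = 1%:M.
Proof.
move=> EE; set C := col_base E; set C' := row_base E.
have CC' : C *m C' = E := mulmx_base E.
have [L LC] : exists L, L *m C = 1%:M by apply/row_fullP; apply: col_base_full.
have [R C'R] : exists R, C' *m R = 1%:M by apply/row_freeP; apply: row_base_free.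
clearbody C C'; exists (\rank E), C, C'; split => //.
have LER : L *m (C *m C') *m R = 1%:M by rewrite mulmxA LC mul1mx C'R.
have -> : C' *m C = L *m (C *m C') *m (C *m C') *m R.
  by rewrite !mulmxA LC mul1mx -!mulmxA C'R mulmx1.
by rewrite CC' -(mulmxA L) EE -LER CC'.
Qed.

Lemma split_mod M d (V : 'M_(mdim M, d)) (P : 'M_(d, mdim M)) (ZB XB : 'M_d) :
  (0 < d)%N -> P *m V = 1%:M ->
  mZ M *m V = V *m ZB -> mX M *m V = V *m XB ->
  P *m mZ M = ZB *m P -> P *m mX M = XB *m P ->
  exists M', (mdim M' < mdim M)%N /\ wiso M (dsum (mkMod ZB XB) M').
Proof.
move=> d_gt0 PV ZV XV PZ PX.
set E := 1%:M - V *m P.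
have EV : E *m V = 0 by rewrite mulmxBl mul1mx -mulmxA PV mulmx1 subrr.
have PE : P *m E = 0 by rewrite mulmxBr mulmx1 mulmxA PV mul1mx subrr.
have EE : E *m E = E by rewrite {1}/E mulmxBl mul1mx -mulmxA PE mulmx0 subr0.
have [r [C [C' [CC' C'C]]]] := idempotent_factor EE.
have C'E : C' *m E = C' by rewrite -CC' mulmxA C'C mul1mx.
have EC : E *m C = C by rewrite -CC' -mulmxA C'C mulmx1.
have C'V : C' *m V = 0 by rewrite -C'E -mulmxA EV mulmx0.
have PC : P *m C = 0 by rewrite -EC mulmxA PE mul0mx.
have C'_intertw A B : A *m V = V *m B -> C' *m A = C' *m A *m C *m C'.
  move=> AV; rewrite -mulmxA CC' mulmxBr mulmx1 !mulmxA -(mulmxA C') AV.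
  by rewrite mulmxA C'V !mul0mx subr0.
pose M' := mkMod (C' *m mZ M *m C) (C' *m mX M *m C).
have iso : wiso M (dsum (mkMod ZB XB) M').
  exists (col_mx P C'), (row_mx V C); split.
  - by rewrite mul_row_col CC' /E addrC subrK.
  - by rewrite mul_col_row PV PC C'V C'C -scalar_mx_block.
  - rewrite /dsum /mZ /= mul_col_mx mul_block_col !mul0mx addr0 add0r PZ.
    by rewrite -(C'_intertw _ _ ZV).
  - rewrite /dsum /mX /= mul_col_mx mul_block_col !mul0mx addr0 add0r PX.
    by rewrite -(C'_intertw _ _ XV).
exists M'; split => //.
by rewrite (wiso_dim iso) /= -{1}[r]add0n ltn_add2r.
Qed.

Lemma split_modS M c (v : 'cV[k]_(mdim M)) (r : 'rV_(mdim M)) :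
  r *m v = 1%:M -> mZ M *m v = c *: v -> mX M *m v = 0 ->
  r *m mZ M = c *: r -> r *m mX M = 0 ->
  exists M', (mdim M' < mdim M)%N /\ wiso M (dsum (modS c) M').
Proof.
move=> rv Zv Xv rZ rX; apply: (split_mod (V := v) (P := r)) => //.
- by rewrite Zv mul_mx_scalar.
- by rewrite Xv mulmx0.
- by rewrite rZ mul_scalar_mx.
- by rewrite rX mul0mx.
Qed.

Variables (n : nat) (q : k).

Lemma split_modD M l (v : 'cV[k]_(mdim M)) (r : 'rV_(mdim M)) :
  q != 0 -> is_wmod n q M ->
  mZ M *m v = l *: v -> r *m mZ M = (q * l) *: r -> r *m mX M *m v = 1%:M ->
  exists M', (mdim M' < mdim M)%N /\ wiso M (dsum (modD q l 1) M').
Proof.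
move=> q0 [_ ZX XX] Zv rZ r1v.
set Z := mZ M in ZX Zv rZ *; set X := mX M in ZX XX r1v *.
(* [s *m r1] corrects [r] to vanish on [v]; it is zero unless [q * l = l]. *)
set w := X *m v; set r1 := r *m X; set s := r *m v; set r2 := r - s *m r1.
have Zw : Z *m w = (q * l) *: w.
  by rewrite mulmxA ZX -scalemxAl -mulmxA Zv -scalemxAr scalerA.
have Xw : X *m w = 0 by rewrite mulmxA XX mul0mx.
have r1X : r1 *m X = 0 by rewrite -mulmxA XX mulmx0.
have r1Z : r1 *m Z = l *: r1.
  have XZ : X *m Z = q^-1 *: (Z *m X) by rewrite ZX scalerA mulVf // scale1r.
  rewrite -mulmxA XZ -scalemxAr mulmxA rZ -(scalemxAl (q * l) r X).
  by rewrite scalerA mulrA mulVf // mul1r.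
have r1w : r1 *m w = 0 by rewrite mulmxA r1X mul0mx.
have r2v : r2 *m v = 0 by rewrite mulmxBl -mulmxA r1v mulmx1 subrr.
have r2w : r2 *m w = 1%:M by rewrite mulmxBl -mulmxA r1w mulmx0 subr0 mulmxA.
have r2X : r2 *m X = r1 by rewrite mulmxBl -mulmxA r1X mulmx0 subr0.
have r2Z : r2 *m Z = (q * l) *: r2.
  have sl : l *: s = (q * l) *: s by rewrite scalemxAr -Zv mulmxA rZ -scalemxAl.
  rewrite mulmxBl rZ -mulmxA r1Z -scalemxAr scalemxAl sl -(scalemxAl _ s).
  by rewrite -scalerBr.
apply: (split_mod (V := row_mx v w) (P := col_mx r1 r2)) => //.
- by rewrite mul_col_row r1v r1w r2v r2w -scalar_mx_block.
- rewrite mul_mx_row mul_row_block !mulmx0 addr0 add0r.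
  by rewrite Zv Zw !mul_mx_scalar.
- by rewrite mul_mx_row mul_row_block !mulmx0 mulmx1 addr0 add0r Xw.
- rewrite mul_col_mx mul_block_col !mul0mx addr0 [0 + _]add0r.
  by rewrite r1Z r2Z !mul_scalar_mx.
- by rewrite mul_col_mx mul_block_col !mul0mx !addr0 mul1mx r1X r2X.
Qed.

End Splitting.

Lemma prim_root_neq0 (R : nzRingType) m (z : R) : m.-primitive_root z -> z != 0.
Proof.
move=> z_prim; apply/eqP => z0; move: (prim_expr_order z_prim).
by rewrite z0 expr0n gtn_eqF ?(prim_order_gt0 z_prim) // => /eqP; rewrite eq_sym oner_eq0.
Qed.

Section DiagonalMatrices.
Variable k : fieldType.

Lemma diag_mx_exp_entry m (d : 'rV[k]_m) j i : (diag_mx d ^+ j) i i = d 0 i ^+ j.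
Proof.
elim: j => [|j IH]; first by rewrite !expr0 mxE eqxx.
by rewrite !exprS -mulmxE mul_diag_mx mxE IH.
Qed.

Lemma delta_mul_diag_mx m (d : 'rV[k]_m) i :
  (delta_mx 0 i : 'rV_m) *m diag_mx d = d 0 i *: delta_mx 0 i.
Proof. by rewrite -rowE row_diag_mx. Qed.

Lemma diag_mx_mul_delta m (d : 'rV[k]_m) j :
  diag_mx d *m (delta_mx j 0 : 'cV_m) = d 0 j *: delta_mx j 0.
Proof.
apply/matrixP => a b; rewrite mul_diag_mx !mxE.
by case: (eqVneq a j) => [->|]; rewrite ?andbT ?andbF ?mul0r ?mulr0.
Qed.

Lemma delta_mul_delta1 m (i : 'I_m) : (delta_mx 0 i : 'rV[k]_m) *m delta_mx i 0 = 1%:M.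
Proof. by rewrite mul_delta_mx; apply/matrixP => a b; rewrite !ord1 !mxE. Qed.

Lemma delta_mul_mul_delta m (A : 'M[k]_m) i j :
  (delta_mx 0 i : 'rV_m) *m A *m delta_mx j 0 = (A i j)%:M.
Proof. by rewrite -rowE -colE [LHS]mx11_scalar !mxE. Qed.

End DiagonalMatrices.

Section Decomposition.
Variable k : fieldType.
Variables (n : nat) (q : k).
Hypothesis q_prim : (2 * n).-primitive_root q.
Implicit Types M : wmod k.

Let q_neq0 : q != 0 := prim_root_neq0 q_prim.

Definition wmod_eigenvalues : seq k := 0 :: [seq q ^+ i | i <- iota 0 (2 * n)].

Lemma uniq_wmod_eigenvalues : uniq wmod_eigenvalues.
Proof.
rewrite /= map_inj_in_uniq ?iota_uniq ?andbT.
  by apply/mapP => -[i _ /eqP]; rewrite eq_sym expf_eq0 (negPf q_neq0) andbF.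
move=> i j; rewrite !mem_iota !add0n => /andP[_ lti] /andP[_ ltj] /eqP.
by rewrite (eq_prim_root_expr q_prim) !modn_small // => /eqP.
Qed.

Lemma prod_wmod_eigenvalues :
  \prod_(x <- wmod_eigenvalues) ('X - x%:P) = 'X^((2 * n).+1) - 'X :> {poly k}.
Proof.
rewrite big_cons big_map subr0 -{1}[(2 * n)%N]subn0 (factor_Xn_sub_1 q_prim).
by rewrite mulrBr mulr1 -exprS.
Qed.

Lemma wmod_diagonalize m (Z X : 'M[k]_m.+1) : Z ^+ (2 * n).+1 = Z ->
  exists (d : 'rV_m.+1) X', wiso (mkMod Z X) (mkMod (diag_mx d) X').
Proof.
move=> Z_root.
have minpoly_dvd : mxminpoly Z %| \prod_(x <- wmod_eigenvalues) ('X - x%:P).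
  apply: mxminpoly_min; rewrite prod_wmod_eigenvalues.
  by rewrite rmorphB /= rmorphXn /= horner_mx_X Z_root subrr.
have [P Pu /diagonalizable_forPex [d /(simmxP Pu) PZ]] := (diagonalizableP Z).2
  (ex_intro2 _ _ wmod_eigenvalues uniq_wmod_eigenvalues minpoly_dvd).
exists d, (P *m X *m invmx P), P, (invmx P); split => //.
- exact: mulVmx.
- exact: mulmxV.
- by rewrite /mX /= mulmxKV.
Qed.

Lemma split_diag m (d : 'rV[k]_m) X : (0 < m)%N ->
  is_wmod n q (mkMod (diag_mx d) X) ->
  exists j i M', [/\ (j < 2)%N, (mdim M' < m)%N &
                     wiso (mkMod (diag_mx d) X) (dsum (indec q j (d 0 i)) M')].
Proof.
move=> m_gt0 VM; have [_ ZX _] := VM.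
have {}ZX : diag_mx d *m X = q *: (X *m diag_mx d) := ZX.
case: (eqVneq X 0) => [-> | /matrix0Pn [i [j Xij]]].
  pose i := Ordinal m_gt0.
  have [M' [lt iso]] := @split_modS k (mkMod (diag_mx d) 0) (d 0 i)
    (delta_mx i 0) (delta_mx 0 i) (delta_mul_delta1 k i) (diag_mx_mul_delta d i)
    (mul0mx _ _) (delta_mul_diag_mx d i) (mulmx0 _ _).
  by exists 0%N, i, M'.
have dij : d 0 i = q * d 0 j.
  have := congr1 (fun A : 'M_m => A i j) ZX.
  by rewrite /= mul_diag_mx mul_mx_diag !mxE mulrC mulrCA => /(mulfI Xij).
pose r := (X i j)^-1 *: (delta_mx 0 i : 'rV_m).
have rZ : r *m diag_mx d = (q * d 0 j) *: r.
  by rewrite -scalemxAl delta_mul_diag_mx scalerA mulrC -dij -scalerA.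
have rXv : r *m X *m delta_mx j 0 = 1%:M.
  by rewrite -!scalemxAl delta_mul_mul_delta scale_scalar_mx mulVf.
have [M' [lt iso]] := @split_modD k n q (mkMod (diag_mx d) X) (d 0 j)
  (delta_mx j 0) r q_neq0 VM (diag_mx_mul_delta d j) rZ rXv.
by exists 1%N, j, M'.
Qed.

Lemma wmod_split M : is_wmod n q M -> (0 < mdim M)%N ->
  exists j c M', [/\ (j < 2)%N, c ^+ (2 * n).+1 = c, (mdim M' < mdim M)%N &
                     wiso M (dsum (indec q j c) M')].
Proof.
case: M => [[|m] [Z X]] VM //= _; have [Z_root _ _] := VM.
have [d [X' iso]] := wmod_diagonalize X Z_root.
have VD := wiso_wmod iso VM; have [d_root _ _] := VD.
have [j [i [M' [j_lt2 lt iso']]]] := split_diag (ltn0Sn m) VD.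
exists j, (d 0 i), M'; split => //; last exact: wiso_trans iso iso'.
have := congr1 (fun A : 'M_m.+1 => A i i) d_root.
by rewrite /= diag_mx_exp_entry mxE eqxx mulr1n.
Qed.

End Decomposition.

Section Invariants.
Variable k : fieldType.
Variable q : k.
Implicit Types M N : wmod k.

Definition zeig_dim (c : k) M : int :=
  (mdim M)%:Z - (\rank (mZ M - c%:M))%:Z.
Definition xeig_rank (c : k) M : int :=
  (\rank (mX M))%:Z - (\rank (mX M *m (mZ M - c%:M)))%:Z.

(* [xeig_rank c] counts the summands D(c) and [zeig_dim c] the summands S(c),
   D(c) and D(c / q), so [mult j c M] is the multiplicity of [indec q j c] in M. *)
Definition mult (j : nat) (c : k) M : int :=
  if j is 0%N then zeig_dim c M - xeig_rank c M - xeig_rank (c / q) M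
  else xeig_rank c M.

Lemma mxrank_conj m p (f : 'M[k]_(p, m)) (g : 'M_(m, p)) (A : 'M_m) :
  g *m f = 1%:M -> \rank (f *m A *m g) = \rank A.
Proof.
move=> gf; have le_rank a b c d (L : 'M[k]_(a, b)) B (R : 'M_(c, d)) :
    (\rank (L *m B *m R) <= \rank B)%N.
  exact: leq_trans (mxrankM_maxl _ _) (mxrankM_maxr _ _).
have A_conj : A = g *m (f *m A *m g) *m f.
  by rewrite !mulmxA gf mul1mx -mulmxA gf mulmx1.
by apply/eqP; rewrite eqn_leq le_rank {1}A_conj le_rank.
Qed.

Lemma wiso_conj M N c : wiso M N -> exists (f : 'M_(mdim N, mdim M)) g,
  [/\ g *m f = 1%:M, mZ N - c%:M = f *m (mZ M - c%:M) *m g,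
      mX N = f *m mX M *m g &
      mX N *m (mZ N - c%:M) = f *m (mX M *m (mZ M - c%:M)) *m g].
Proof.
case=> f [g [gf fg fZ fX]]; exists f, g.
have Zc : mZ N - c%:M = f *m (mZ M - c%:M) *m g.
  rewrite (intertw_conj fg fZ) mulmxBr mulmxBl mul_mx_scalar -scalemxAl fg.
  by rewrite scalemx1.
split => //; first exact: intertw_conj fg fX.
by rewrite Zc (intertw_conj fg fX) !mulmxA -(mulmxA _ g f) gf mulmx1.
Qed.

Lemma zeig_dim_wiso c M N : wiso M N -> zeig_dim c M = zeig_dim c N.
Proof.
move=> iso; have [f [g [gf Zc _ _]]] := wiso_conj c iso.
rewrite /zeig_dim Zc mxrank_conj //; congr (_ - _).
by rewrite (wiso_dim iso).
Qed.

Lemma xeig_rank_wiso c M N : wiso M N -> xeig_rank c M = xeig_rank c N.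
Proof.
move=> iso; have [f [g [gf _ X_conj XZc]]] := wiso_conj c iso.
by rewrite /xeig_rank XZc X_conj !mxrank_conj.
Qed.

Lemma zeig_dim_dsum c M N : zeig_dim c (dsum M N) = zeig_dim c M + zeig_dim c N.
Proof.
rewrite /zeig_dim /= block_diag_sub_scalar rank_diag_block_mx.
by rewrite !PoszD opprD addrACA.
Qed.

Lemma xeig_rank_dsum c M N : xeig_rank c (dsum M N) = xeig_rank c M + xeig_rank c N.
Proof.
rewrite /xeig_rank /= block_diag_sub_scalar block_diag_mul !rank_diag_block_mx.
by rewrite !PoszD opprD addrACA.
Qed.

Lemma mult_wiso j c M N : wiso M N -> mult j c M = mult j c N.
Proof.
move=> iso; case: j => [|j] /=.
  by rewrite (zeig_dim_wiso _ iso) !(xeig_rank_wiso _ iso).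
by rewrite (xeig_rank_wiso _ iso).
Qed.

Lemma mult_dsum j c M N : mult j c (dsum M N) = mult j c M + mult j c N.
Proof.
by case: j => [|j] /=; rewrite ?zeig_dim_dsum !xeig_rank_dsum //; ring.
Qed.

Lemma mxrank_scalar1 (x : k) : \rank (x%:M : 'M_1) = (x != 0).
Proof.
have [->|x0] := eqVneq x 0; first by rewrite raddf0 mxrank0.
by rewrite mxrank_unit // unitmxE det_scalar1 unitfE.
Qed.

Lemma zeig_dim_modS c c' : zeig_dim c (modS c') = (c' == c)%:R.
Proof.
by rewrite /zeig_dim /mZ /= -raddfB mxrank_scalar1 subr_eq0; case: (c' == c).
Qed.

Lemma xeig_rank_modS c c' : xeig_rank c (modS c') = 0.
Proof. by rewrite /xeig_rank /= mul0mx mxrank0 subrr. Qed.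

Lemma modD_sub_scalar l c :
  mZ (modD q l 1) - c%:M = block_mx (l - c)%:M 0 0 (q * l - c)%:M :> 'M_(1 + 1).
Proof. by rewrite block_diag_sub_scalar -!raddfB. Qed.

Lemma zeig_dim_modD c l : zeig_dim c (modD q l 1) = (l == c)%:R + (q * l == c)%:R.
Proof.
rewrite /zeig_dim modD_sub_scalar rank_diag_block_mx !mxrank_scalar1 !subr_eq0.
by case: (l == c); case: (q * l == c).
Qed.

Lemma xeig_rank_modD c l : xeig_rank c (modD q l 1) = (l == c)%:R.
Proof.
rewrite /xeig_rank modD_sub_scalar /mX /= (@mulmx_block _ 1 1 1 1 1 1) !mulmx0 !mul0mx.
rewrite !addr0 mul1mx !block_mxEv !row_mx0 !rank_col_0mx !rank_row_mx0 mxrank1.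
by rewrite mxrank_scalar1 subr_eq0; case: (l == c).
Qed.

Lemma mult_indec j j' c c' : q != 0 -> (j < 2)%N -> (j' < 2)%N ->
  mult j c (indec q j' c') = ((j' == j) && (c' == c))%:R.
Proof.
move=> q0; case: j => [|[|//]] _; case: j' => [|[|//]] _ /=;
  rewrite ?zeig_dim_modS ?xeig_rank_modS ?zeig_dim_modD ?xeig_rank_modD ?subr0 //.
have -> : (q * c' == c) = (c' == c / q).
  by rewrite (can2_eq (mulKf q0) (mulVKf q0)) mulrC.
by ring.
Qed.

End Invariants.

Section GreenRing.
Variable k : fieldType.
Variables (n : nat) (q a : k).
Hypothesis q_prim : (2 * n).-primitive_root q.
Local Notation basis := (basis_comb n q a).
Local Notation bc := (bcMod n q a).
Local Notation cd := (cdMod n q a).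
Local Notation green_eq := (green_eq n q).
Implicit Types (x y : fz k) (M : wmod k).

Let q_neq0 : q != 0 := prim_root_neq0 q_prim.
Let q_order : q ^+ (2 * n) = 1 := prim_expr_order q_prim.

Lemma coef_basis lam mu M : coef (basis lam mu) M =
  \sum_(i <- iota 0 (2 * n)) \sum_(j <- iota 0 2) lam i j * (bc i j == M)%:R
  + \sum_(l <- iota 0 2) mu l * (cd l == M)%:R.
Proof.
rewrite /coef big_mkcond /basis_comb big_cat big_allpairs_dep /= !big_cons !big_nil.
have ifE (b : bool) (z : int) : (if b then z else 0) = z * b%:R.
  by case: b; rewrite ?mulr1 ?mulr0.
by congr (_ + _); [apply: eq_bigr => i _; rewrite !big_cons !big_nil |]; rewrite !ifE.
Qed.

Lemma sum_iota_delta (F : nat -> int) N l : (l < N)%N ->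
  \sum_(i <- iota 0 N) (i == l)%:R * F i = F l.
Proof.
move=> lN; rewrite (bigD1_seq l) ?mem_iota ?iota_uniq //= eqxx mul1r big1 ?addr0 //.
by move=> i /negPf ->; rewrite mul0r.
Qed.

Definition spannable x := exists lam mu, green_eq x (basis lam mu).

Lemma spannable_green x y : green_eq x y -> spannable y -> spannable x.
Proof. by move=> exy [lam [mu ey]]; exists lam, mu; apply: green_eq_trans exy ey. Qed.

Lemma spannable_basis x lam mu : coef x =1 coef (basis lam mu) -> spannable x.
Proof. by move=> ex; exists lam, mu; apply: green_eq_coef (green_eq_refl _ _ x). Qed.

Lemma spannable_nil : spannable [::].
Proof.
apply: (@spannable_basis _ (fun _ _ => 0) (fun _ => 0)) => M.
rewrite coef_nil coef_basis !big1 ?addr0 // => [l _|i _]; first by rewrite mul0r.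
by rewrite big1 // => j _; rewrite mul0r.
Qed.

Lemma spannable_cat x y : spannable x -> spannable y -> spannable (x ++ y).
Proof.
move=> [lam [mu ex]] [lam' [mu' ey]].
apply: (spannable_green (green_eq_cat ex ey)).
apply: (@spannable_basis _ (fun i j => lam i j + lam' i j) (fun l => mu l + mu' l)) => M.
rewrite coef_cat !coef_basis addrACA -!big_split /=; congr (_ + _).
  by apply: eq_bigr => i _; rewrite -big_split; apply: eq_bigr => j _; rewrite mulrDl.
by apply: eq_bigr => l _; rewrite mulrDl.
Qed.

Lemma spannable_scale c x : spannable x -> spannable (fz_scale c x).
Proof.
move=> [lam [mu ex]]; apply: (spannable_green (green_eq_scale c ex)).
apply: (@spannable_basis _ (fun i j => c * lam i j) (fun l => c * mu l)) => M.
rewrite coef_scale !coef_basis mulrDr !mulr_sumr; congr (_ + _).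
  by apply: eq_bigr => i _; rewrite mulr_sumr; apply: eq_bigr => j _; rewrite mulrA.
by apply: eq_bigr => l _; rewrite mulrA.
Qed.

Lemma spannable_bc i j : (i < 2 * n)%N -> (j < 2)%N -> spannable [:: (1, bc i j)].
Proof.
move=> iN jN.
apply: (@spannable_basis _ (fun i' j' => ((i' == i) && (j' == j))%:R) (fun _ => 0)) => M.
rewrite coef_basis coef_cons coef_nil addr0 [X in _ + X]big1 => [|l _]; last first.
  by rewrite mul0r.
under eq_bigr => i' _ do under eq_bigr => j' _ do rewrite -mulnb natrM -mulrA.
under eq_bigr => i' _ do rewrite -mulr_sumr.
by rewrite sum_iota_delta // sum_iota_delta //= addr0; case: (bc i j == M).
Qed.

Lemma spannable_cd l : (l < 2)%N -> spannable [:: (1, cd l)].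
Proof.
move=> lN; apply: (@spannable_basis _ (fun _ _ => 0) (fun l' => (l' == l)%:R)) => M.
rewrite coef_basis coef_cons coef_nil addr0 big1 ?add0r => [|i _]; last first.
  by rewrite big1 // => j _; rewrite mul0r.
by rewrite sum_iota_delta //=; case: (cd l == M).
Qed.

Lemma qexp_root i : (q ^+ i) ^+ (2 * n).+1 = q ^+ i.
Proof. by rewrite exprS -exprM mulnC exprM q_order expr1n mulr1. Qed.

Lemma spannable_indec j c : (j < 2)%N -> c ^+ (2 * n).+1 = c ->
  spannable [:: (1, indec q j c)].
Proof.
move=> jN c_root; have [->|c0] := eqVneq c 0.
  by rewrite -(cdMod_indec n q a) //; apply: spannable_cd.
have /(prim_rootP q_prim) [i ->] : c ^+ (2 * n) = 1.
  by apply: (mulfI c0); rewrite -exprS c_root mulr1.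
have iso := bcMod_wiso n a q_neq0 i jN.
apply: spannable_green (spannable_bc (ltn_ord i) jN).
apply: green_eq_wiso (wiso_sym iso) => //; last apply: (wiso_wmod (wiso_sym iso)).
all: exact: (indec_wmod q_order j (qexp_root i)).
Qed.

Lemma spannable_mod M : is_wmod n q M -> spannable [:: (1, M)].
Proof.
elim: {M}(mdim M).+1 {-2}M (ltnSn (mdim M)) => // m IH M.
rewrite ltnS => M_le VM; have [M0|M_gt0] := posnP (mdim M).
  exact: spannable_green (green_eq_dim0 M0 VM) spannable_nil.
have [j [c [M' [jN c_root M'_lt iso]]]] := wmod_split q_prim VM M_gt0.
have VD := wiso_wmod iso VM; have [VB VM'] := (is_wmod_dsum _ _ _ _).1 VD.
apply: spannable_green (green_eq_wiso VM VD iso) _.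
apply: spannable_green (green_eq_dsum VB VM') _.
exact: spannable_cat (spannable_indec jN c_root) (IH _ (leq_trans M'_lt M_le) VM').
Qed.

Lemma spannable_all x : all_valid n q x -> spannable x.
Proof.
elim: x => [|e x IH] Vx; first exact: spannable_nil.
have -> : e :: x = fz_scale e.1 [:: (1, e.2)] ++ x.
  by rewrite /fz_scale /= mulr1 -surjective_pairing.
apply: spannable_cat; first by apply/spannable_scale/spannable_mod/Vx; rewrite inE eqxx.
by apply: IH => f fx; apply: Vx; rewrite inE fx orbT.
Qed.

Lemma fz_eval_basis phi lam mu : fz_eval phi (basis lam mu) =
  \sum_(i <- iota 0 (2 * n)) (lam i 0%N * phi (bc i 0) + lam i 1%N * phi (bc i 1))
  + (mu 0%N * phi (cd 0) + mu 1%N * phi (cd 1)).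
Proof.
rewrite /fz_eval /basis_comb big_cat big_allpairs_dep /= !big_cons !big_nil /= !addr0.
by congr (_ + _); apply: eq_bigr => i _; rewrite !big_cons big_nil addr0.
Qed.

Lemma fz_eval_mult_basis j c lam mu : (j < 2)%N ->
  fz_eval (mult q j c) (basis lam mu) =
  \sum_(i <- iota 0 (2 * n)) (q ^+ i == c)%:R * lam i j + (0 == c)%:R * mu j.
Proof.
move=> jN; have mult_bc i j' : (j' < 2)%N ->
    mult q j c (bc i j') = ((j' == j) && (q ^+ i == c))%:R.
  by move=> j'N; rewrite (mult_wiso _ _ _ (bcMod_wiso n a q_neq0 i j'N)) mult_indec.
rewrite fz_eval_basis !(cdMod_indec n q a) // !mult_indec //.
under eq_bigr => i _ do rewrite !mult_bc //.
case: j jN {mult_bc} => [|[|//]] _ /=; congr (_ + _); try apply: eq_bigr => i _.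
all: by rewrite mulr0 ?addr0 ?add0r mulrC.
Qed.

Lemma basis_free lam mu : green_eq (basis lam mu) [::] ->
  (forall i j, (i < 2 * n)%N -> (j < 2)%N -> lam i j = 0) /\
  (forall l, (l < 2)%N -> mu l = 0).
Proof.
move=> eq0; have mult0 j c : (j < 2)%N -> fz_eval (mult q j c) (basis lam mu) = 0.
  move=> jN; rewrite (fz_eval_green (@mult_dsum _ q j c) (@mult_wiso _ q j c) eq0).
  by rewrite /fz_eval big_nil.
split => [i j iN jN | l lN].
  have := mult0 j (q ^+ i) jN; rewrite fz_eval_mult_basis // eq_sym expf_eq0.
  rewrite (negPf q_neq0) andbF mul0r addr0.
  rewrite (eq_big_seq (fun i' => (i' == i)%:R * lam i' j)) ?sum_iota_delta //.
  move=> i'; rewrite mem_iota => /andP [_ i'N].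
  by rewrite (eq_prim_root_expr q_prim) !modn_small.
have := mult0 l 0 lN; rewrite fz_eval_mult_basis // eqxx mul1r big1_seq ?add0r //.
by move=> i _; rewrite expf_eq0 (negPf q_neq0) andbF mul0r.
Qed.

End GreenRing.

Theorem corollary4p3 (k : closedFieldType) (n : nat) (q a : k) :
  [pchar k] =i pred0 -> (0 < n)%N -> (2 * n).-primitive_root q -> a != 0 ->
  [/\ (* r(wH_{4n}) is generated as a ring by b, c, d *)
      (forall x : fz k, all_valid n q x ->
         exists ws : seq (int * seq 'I_3),
           green_eq n q x [seq (w.1, wordMod n q a w.2) | w <- ws]),
      (* the b^i c^j (i < 2n, j < 2) and c^l d (l < 2) span r(wH_{4n}) *)
      (forall x : fz k, all_valid n q x ->
         exists (lam : nat -> nat -> int) (mu : nat -> int),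
           green_eq n q x (basis_comb n q a lam mu)) &
      (* ... and are Z-linearly independent *)
      (forall (lam : nat -> nat -> int) (mu : nat -> int),
         green_eq n q (basis_comb n q a lam mu) [::] ->
         (forall i j, (i < 2 * n)%N -> (j < 2)%N -> lam i j = 0) /\
         (forall l, (l < 2)%N -> mu l = 0))].
Proof.
(* [0 < n] follows from [q_prim]. *)
move=> _ _ q_prim _; split.
- move=> x /(spannable_all a q_prim) [lam [mu x_eq]].
  by exists (basis_words n lam mu); rewrite basis_words_comb.
- exact: spannable_all.
- exact: basis_free.
Qed.
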